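(* Let $n\ge1$, $l\ge0$, and define the subgroup of $\mathrm{Br}_{2n+l}$ $$E_{2n,l}:=\left\langle \sigma_{i,j}^{m_{ij}},\ 1\le i<j\le 2n+l\right\rangle,\quad m_{ij}=\begin{cases}1 & i,j\le l,\ \text{or } i>l,\ i\equiv j\ (2)\\ 2 & i\le l<j\\ 3 & i,j>l,\ i\not\equiv j\ (2).\end{cases}$$ Then $E_{2n,l}$ is also generated by $$\sigma_i\ (i<l),\quad \sigma_{i,i+2}\ (l<i\le 2n+l-2),\quad \sigma_{i,j}^2\ (i\le l<j),\quad \sigma_i^3\ (l<i<2n+l,\ i\not\equiv l\ (2)).$$
   Context: $\mathrm{Br}_N=\langle\sigma_1,\dots,\sigma_{N-1}\mid \sigma_i\sigma_{i+1}\sigma_i=\sigma_{i+1}\sigma_i\sigma_{i+1},\ \sigma_i\sigma_j=\sigma_j\sigma_i\ (|i-j|\ge2)\rangle$; $\sigma_{i,i+1}=\sigma_i$ and $\sigma_{i,j}=\sigma_{j-1}\cdots\sigma_{i+1}\sigma_i\sigma_{i+1}^{-1}\cdots\sigma_{j-1}^{-1}$ for $j>i+1$. *)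

(* The braid group Br_N is encoded as its
   presentation: words in the letters sigma_i^{+-1} (1 <= i < N), modulo the
   congruence generated by free reduction and the braid relations. *)
From mathcomp Require Import all_boot.
Set Implicit Arguments. Unset Strict Implicit. Unset Printing Implicit Defensive.

(* a letter (i, false) is sigma_i, (i, true) is sigma_i^{-1} *)
Definition letter := (nat * bool)%type.
Definition word := seq letter.

Definition inv_word (w : word) : word := rev (map (fun l => (l.1, ~~ l.2)) w).
Definition gen (i : nat) : word := [:: (i, false)].
Definition wpow (w : word) (m : nat) : word := flatten (nseq m w).

Definition valid_word (N : nat) (w : word) : bool :=
  all (fun l => (1 <= l.1) && (l.1 < N)) w.

Inductive br_eq (N : nat) : word -> word -> Prop :=
| br_refl w : br_eq N w w
| br_sym u v : br_eq N u v -> br_eq N v u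
| br_trans u v w : br_eq N u v -> br_eq N v w -> br_eq N u w
| br_cat u u' v v' : br_eq N u u' -> br_eq N v v' -> br_eq N (u ++ v) (u' ++ v')
| br_free i b : br_eq N [:: (i, b); (i, ~~ b)] [::]
| br_braid i : 1 <= i -> i.+1 < N ->
    br_eq N [:: (i, false); (i.+1, false); (i, false)]
            [:: (i.+1, false); (i, false); (i.+1, false)]
| br_comm i j : 1 <= i -> i.+1 < j -> j < N ->
    br_eq N [:: (i, false); (j, false)] [:: (j, false); (i, false)].

(* sigma_{i,j} = sigma_{j-1} ... sigma_{i+1} sigma_i sigma_{i+1}^{-1} ... sigma_{j-1}^{-1}
   (equal to sigma_i when j = i+1) *)
Definition sigma_ij (i j : nat) : word :=
  let u := [seq (k, false) | k <- rev (iota i.+1 (j - i.+1))] in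
  u ++ gen i ++ inv_word u.

Inductive in_gen (S : word -> Prop) : word -> Prop :=
| gen_nil : in_gen S [::]
| gen_mul s w : S s -> in_gen S w -> in_gen S (s ++ w)
| gen_mulinv s w : S s -> in_gen S w -> in_gen S (inv_word s ++ w).

Definition in_subgroup (N : nat) (S : word -> Prop) (w : word) : Prop :=
  exists2 w', br_eq N w w' & in_gen S w'.

Definition mexp (l i j : nat) : nat :=
  if j <= l then 1
  else if i <= l then 2
  else if odd i == odd j then 1 else 3.

Definition E_gens (n l : nat) (w : word) : Prop :=
  exists i j, [/\ 1 <= i, i < j, j <= 2 * n + l & w = wpow (sigma_ij i j) (mexp l i j)].

Definition E_gens' (n l : nat) (w : word) : Prop :=
  [\/ exists i, [/\ 1 <= i, i < l & w = gen i],
      exists i, [/\ l < i, i <= 2 * n + l - 2 & w = sigma_ij i i.+2],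
      exists i j, [/\ 1 <= i, i <= l, l < j, j <= 2 * n + l & w = wpow (sigma_ij i j) 2]
    | exists i, [/\ l < i, i < 2 * n + l, odd i != odd l & w = wpow (gen i) 3]].

From mathcomp Require Import all_boot.
From mathcomp Require Import zify.
From Stdlib Require Import Setoid Morphisms.

Set Implicit Arguments.
Unset Strict Implicit.
Unset Printing Implicit Defensive.

(* Every generator of the second list occurs in the first, as [sigma_{i,i+1} = sigma_i].
   Conversely, [sigma_{i,j}] with [j <= l] is a word in the [sigma_k], [k < l], and
   [sigma_{i,j}^2] with [i <= l < j] lies in both lists.  For [l < i < j] the identity
   [sigma_{i,j+2} = sigma_{j,j+2} sigma_{i,j} sigma_{j,j+2}^{-1}] and [m_{i,j+2} = m_{i,j}]
   reduce [sigma_{i,j}^{m_ij}] to the cases [j - i] in {1, 2}: [sigma_{i,i+2}] is a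
   generator, and [sigma_i^3] is one when [i] and [l] have different parities and is
   otherwise a conjugate of [sigma_{i-1}^3] by [sigma_{i-1,i+1}]. *)

Lemma inv_word_cat u v : inv_word (u ++ v) = inv_word v ++ inv_word u.
Proof. by rewrite /inv_word map_cat rev_cat. Qed.

Lemma inv_wordK : involutive inv_word.
Proof. by elim=> // [[k b] w IH]; rewrite -cat1s !inv_word_cat IH /= negbK. Qed.

Lemma wpowS w m : wpow w m.+1 = w ++ wpow w m.
Proof. by []. Qed.

Lemma wpow1 w : wpow w 1 = w.
Proof. exact: cats0. Qed.

#[export] Instance br_equiv N : Equivalence (br_eq N).
Proof. split; [exact: br_refl | exact: br_sym | exact: br_trans]. Qed.

#[export] Instance br_cat_proper N : Proper (br_eq N ==> br_eq N ==> br_eq N) cat.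
Proof. by move=> ? ? ? ? ? ?; apply: br_cat. Qed.

#[export] Hint Resolve br_refl : core.

Lemma br_catV N w : br_eq N (w ++ inv_word w) [::].
Proof.
elim: w => [|[k b] w IH]; first reflexivity.
rewrite -cat1s inv_word_cat -catA (catA w) IH; exact: br_free.
Qed.

Lemma br_Vcat N w : br_eq N (inv_word w ++ w) [::].
Proof. by have := br_catV N (inv_word w); rewrite inv_wordK. Qed.

#[export] Instance br_inv_word_proper N : Proper (br_eq N ==> br_eq N) inv_word.
Proof.
move=> u v uv; transitivity (inv_word u ++ v ++ inv_word v).
  by rewrite br_catV cats0.
by rewrite -{1}uv catA br_Vcat.
Qed.

#[export] Instance br_wpow_proper N : Proper (br_eq N ==> eq ==> br_eq N) wpow.
Proof. by move=> u v uv _ m ->; elim: m => // m IH; rewrite !wpowS; apply: br_cat. Qed.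

Lemma br_wpow_conj N c x m :
  br_eq N (wpow (c ++ x ++ inv_word c) m) (c ++ wpow x m ++ inv_word c).
Proof.
elim: m => [|m IH]; first by rewrite br_catV.
by rewrite !wpowS IH -!catA (catA (inv_word c)) br_Vcat.
Qed.

#[export] Instance in_subgroup_proper N S : Proper (br_eq N ==> iff) (in_subgroup N S).
Proof.
by move=> u v uv; split=> -[w ? ?]; exists w => //; [rewrite -uv | rewrite uv].
Qed.

Section Subgroup.

Variable S : word -> Prop.

Lemma in_gen_cat u v : in_gen S u -> in_gen S v -> in_gen S (u ++ v).
Proof.
by move=> Su Sv; elim: Su => [|s w ? _ IH|s w ? _ IH] //; rewrite -catA;
  [apply: gen_mul | apply: gen_mulinv].
Qed.

Lemma in_gen1 s : S s -> in_gen S s.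
Proof. by move=> Ss; rewrite -[s]cats0; apply: gen_mul (gen_nil S). Qed.

Lemma in_gen1V s : S s -> in_gen S (inv_word s).
Proof. by move=> Ss; rewrite -[inv_word s]cats0; apply: gen_mulinv (gen_nil S). Qed.

Lemma in_gen_inv u : in_gen S u -> in_gen S (inv_word u).
Proof.
elim=> [|s w Ss _ IH|s w Ss _ IH]; first exact: gen_nil.
  by rewrite inv_word_cat; apply: in_gen_cat IH (in_gen1V Ss).
by rewrite inv_word_cat inv_wordK; apply: in_gen_cat IH (in_gen1 Ss).
Qed.

Variable N : nat.

Lemma in_subgroup_nil : in_subgroup N S [::].
Proof. by exists [::]; [reflexivity | apply: gen_nil]. Qed.

Lemma in_subgroup_gen s : S s -> in_subgroup N S s.
Proof. by exists s; [reflexivity | apply: in_gen1]. Qed.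

Lemma in_subgroup_cat u v :
  in_subgroup N S u -> in_subgroup N S v -> in_subgroup N S (u ++ v).
Proof. by move=> [u' -> ?] [v' -> ?]; exists (u' ++ v'); [reflexivity | apply: in_gen_cat]. Qed.

Lemma in_subgroup_inv u : in_subgroup N S u -> in_subgroup N S (inv_word u).
Proof. by move=> [u' -> ?]; exists (inv_word u'); [reflexivity | apply: in_gen_inv]. Qed.

Lemma in_subgroup_conj c x :
  in_subgroup N S c -> in_subgroup N S x -> in_subgroup N S (c ++ x ++ inv_word c).
Proof. by move=> Sc Sx; do 2?apply: in_subgroup_cat => //; apply: in_subgroup_inv. Qed.

End Subgroup.

Lemma in_subgroup_sub N (S T : word -> Prop) w :
  (forall s, S s -> in_subgroup N T s) -> in_subgroup N S w -> in_subgroup N T w.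
Proof.
move=> ST [w' -> Sw'].
elim: Sw' => [|s v Ss _ IH|s v Ss _ IH]; first exact: in_subgroup_nil.
  exact: in_subgroup_cat (ST s Ss) IH.
exact: in_subgroup_cat (in_subgroup_inv (ST s Ss)) IH.
Qed.

Section BraidRelations.

Variable N : nat.

Lemma br_context u x y v : br_eq N x y -> br_eq N (u ++ x ++ v) (u ++ y ++ v).
Proof. by move=> ->. Qed.

Lemma br_commV x y :
  br_eq N (x ++ y) (y ++ x) -> br_eq N (inv_word x ++ y) (y ++ inv_word x).
Proof.
move=> xy; transitivity (inv_word x ++ (y ++ x) ++ inv_word x).
  by rewrite -catA br_catV cats0.
by rewrite -xy !catA br_Vcat.
Qed.

Lemma br_comm_letters w m : m < N ->
  all (fun a : letter => (1 <= a.1) && (a.1.+1 < m)) w ->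
  br_eq N (w ++ gen m) (gen m ++ w).
Proof.
move=> mN; elim: w => [|[k b] w IH]; first by rewrite cats0.
case/andP=> /andP[k1 km] /IH wm; rewrite /= in k1 km.
have km_comm : br_eq N (gen k ++ gen m) (gen m ++ gen k) by apply: br_comm.
have {}km_comm : br_eq N ([:: (k, b)] ++ gen m) (gen m ++ [:: (k, b)]).
  by case: b => //; apply: br_commV km_comm.
by rewrite -cat1s -catA wm !catA km_comm.
Qed.

Lemma sigma_ij_succ i : sigma_ij i i.+1 = gen i.
Proof. by rewrite /sigma_ij subnn. Qed.

Lemma sigma_ij_2 i : sigma_ij i i.+2 = [:: (i.+1, false); (i, false); (i.+1, true)].
Proof. by rewrite /sigma_ij subSnn. Qed.

Lemma sigma_ij_rec i j : i < j ->
  sigma_ij i j.+2 = [:: (j.+1, false); (j, false)] ++ sigma_ij i j ++ [:: (j, true); (j.+1, true)].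
Proof.
move=> ij; rewrite /sigma_ij (_ : j.+2 - i.+1 = (j - i.+1) + 2); last by lia.
by rewrite iotaD subnKC // rev_cat map_cat !inv_word_cat -!catA.
Qed.

Lemma sigma_ij_letters i j : i < j -> all (fun a : letter => i <= a.1 < j) (sigma_ij i j).
Proof.
move=> ij; apply/allP=> a.
have conj_letter (c : letter) :
    c \in [seq (k, false) | k <- rev (iota i.+1 (j - i.+1))] -> i <= c.1 < j.
  by move=> /mapP[k]; rewrite mem_rev mem_iota => /andP[? ?] -> /=; lia.
rewrite /sigma_ij /inv_word !mem_cat mem_seq1 mem_rev.
by case/or3P=> [/conj_letter | /eqP-> /= | /mapP[b /conj_letter ? ->]] //; rewrite leqnn.
Qed.

Lemma sigma_ij_conj i j : 1 <= i -> i < j -> j.+2 <= N ->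
  br_eq N (sigma_ij i j.+2) (sigma_ij j j.+2 ++ sigma_ij i j ++ inv_word (sigma_ij j j.+2)).
Proof.
move=> i1 ij jN; set x := sigma_ij i j.
have x_comm : br_eq N (x ++ gen j.+1) (gen j.+1 ++ x).
  apply: br_comm_letters => //; apply: sub_all (sigma_ij_letters ij) => a.
  by move=> /andP[? ?]; apply/andP; lia.
rewrite sigma_ij_rec // sigma_ij_2; symmetry.
transitivity ([:: (j.+1, false); (j, false); (j.+1, true)] ++ (x ++ gen j.+1)
              ++ [:: (j, true); (j.+1, true)]); first by rewrite -!catA.
rewrite x_comm -catA /=.
exact: (br_context [:: (j.+1, false); (j, false)] _ (br_free _ j.+1 true)).
Qed.

Lemma gen_succ_conj b : 1 <= b -> b.+2 <= N ->
  br_eq N (gen b.+1) (inv_word (sigma_ij b b.+2) ++ gen b ++ sigma_ij b b.+2).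
Proof.
move=> b1 bN; rewrite sigma_ij_2 /=; symmetry.
apply: br_trans (br_context [:: (b.+1, false); (b, true); (b.+1, true)] _ (br_braid b1 bN)) _.
apply: br_trans (br_context [:: (b.+1, false); (b, true)] _ (br_free _ b.+1 true)) _.
apply: br_trans (br_context [:: (b.+1, false)] _ (br_free _ b true)) _.
exact: (br_context [:: (b.+1, false)] _ (br_free _ b.+1 false)).
Qed.

End BraidRelations.

Lemma mexp_lower l i j : j <= l -> mexp l i j = 1.
Proof. by rewrite /mexp => ->. Qed.

Lemma mexp_mixed l i j : i <= l < j -> mexp l i j = 2.
Proof. by case/andP=> il lj; rewrite /mexp leqNgt lj il. Qed.

Lemma mexp_upper l i j : l < i -> i < j -> mexp l i j = if odd i == odd j then 1 else 3.
Proof. by move=> li ij; rewrite /mexp leqNgt (ltn_trans li ij) leqNgt li. Qed.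

Lemma mexp_adjacent l i : l < i -> mexp l i i.+1 = 3.
Proof. by move=> li; rewrite mexp_upper //=; case: odd. Qed.

Lemma mexp_skip l i : l < i -> mexp l i i.+2 = 1.
Proof. by move=> li; rewrite mexp_upper //= negbK eqxx. Qed.

Lemma mexp_upperSS l i j : l < i -> i < j -> mexp l i j.+2 = mexp l i j.
Proof. by move=> li ij; rewrite !mexp_upper //= ?negbK; lia. Qed.

Section AlternativeGenerators.

Variables n l : nat.
Local Notation N := (2 * n + l).
Local Notation E := (in_subgroup N (E_gens n l)).
Local Notation E' := (in_subgroup N (E_gens' n l)).

Lemma E_gens'_in_E s : E_gens' n l s -> E s.
Proof.
case=> [[i [i1 il ->]] | [i [li iN ->]] | [i [j [i1 il lj jN ->]]] | [i [li iN il ->]]];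
  apply: in_subgroup_gen.
- by exists i, i.+1; rewrite mexp_lower // wpow1 sigma_ij_succ; split=> //; lia.
- by exists i, i.+2; rewrite mexp_skip // wpow1; split=> //; lia.
- by exists i, j; rewrite mexp_mixed ?il //; split=> //; lia.
- by exists i, i.+1; rewrite mexp_adjacent // sigma_ij_succ; split=> //; lia.
Qed.

Lemma lower_word_in_E' w : all (fun a : letter => 0 < a.1 < l) w -> E' w.
Proof.
elim: w => [|[k b] w IH]; first by rewrite /= => _; apply: in_subgroup_nil.
case/andP=> /= k_range /IH Ew; rewrite -cat1s; apply: in_subgroup_cat Ew.
have Ek : E' (gen k) by apply/in_subgroup_gen/Or41; exists k; split=> //; lia.
by case: b; [apply: in_subgroup_inv Ek | apply: Ek].
Qed.

Lemma cube_in_E' a : l < a < N -> E' (wpow (gen a) 3).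
Proof.
case/andP=> la aN; case: (boolP (odd a == odd l)) => [/eqP a_l | a_l]; last first.
  by apply/in_subgroup_gen/Or44; exists a.
have a_ne : a != l.+1 by apply/eqP=> a_l1; move: a_l; rewrite a_l1 /=; case: odd.
have [b a_def lb] : exists2 b, a = b.+1 & l < b by exists a.-1; lia.
have Eb : E' (sigma_ij b b.+2) by apply/in_subgroup_gen/Or42; exists b; split=> //; lia.
rewrite a_def gen_succ_conj; [|lia|lia].
rewrite -{2}(inv_wordK (sigma_ij b b.+2)) br_wpow_conj.
apply: in_subgroup_conj; first exact: in_subgroup_inv.
apply/in_subgroup_gen/Or44; exists b; split=> //; first lia.
by rewrite -a_l a_def /=; case: odd.
Qed.

Lemma upper_in_E' i j : l < i < j -> j <= N -> E' (wpow (sigma_ij i j) (mexp l i j)).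
Proof.
elim/ltn_ind: j => j IH /andP[li ij] jN.
have [j_lt | j_gt | j_eq] := ltngtP j i.+2.
- have -> : j = i.+1 by lia.
  by rewrite mexp_adjacent // sigma_ij_succ; apply: cube_in_E'; lia.
- have [k ik j_def] : exists2 k, i < k & j = k.+2 by exists j.-2; lia.
  rewrite j_def mexp_upperSS // sigma_ij_conj; [|lia|lia|lia].
  rewrite br_wpow_conj; apply: in_subgroup_conj; last by apply: IH; lia.
  by apply/in_subgroup_gen/Or42; exists k; split=> //; lia.
- rewrite j_eq mexp_skip // wpow1.
  by apply/in_subgroup_gen/Or42; exists i; split=> //; lia.
Qed.

Lemma E_gens_in_E' s : E_gens n l s -> E' s.
Proof.
case=> i [j [i1 ij jN ->]].
case: (leqP j l) => [jl | lj].
  rewrite mexp_lower // wpow1; apply: lower_word_in_E'.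
  by apply: sub_all (sigma_ij_letters ij) => a /andP[? ?]; apply/andP; lia.
case: (leqP i l) => [il | li]; last by apply: upper_in_E'; rewrite ?li.
by apply/in_subgroup_gen/Or43; exists i, j; rewrite mexp_mixed ?il.
Qed.

End AlternativeGenerators.

Theorem mainTheorem15 (n l : nat) (hn : 1 <= n) (w : word) :
  valid_word (2 * n + l) w ->
  (in_subgroup (2 * n + l) (E_gens n l) w <->
   in_subgroup (2 * n + l) (E_gens' n l) w).
Proof.
by move=> _; split; apply: in_subgroup_sub; [apply: E_gens_in_E' | apply: E_gens'_in_E].
Qed.
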